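(* Let $u$ be a vertex of $K$ and $n\in\mathbb N$. The edge-path distance from any boundary vertex of the ball $B(u,n,K)$ to $u$ is either $n$ or $n-1$.
   Context: $K$ is the pentagonal combinatorial tiling: a 2-dimensional CW-complex homeomorphic to the open disk, obtained as follows. The subdivision rule $\omega$ acts on a pentagon with boundary vertices $v_1,\dots,v_5$ in cyclic order (indices mod 5): add a vertex $m_i$ inside each edge $v_iv_{i+1}$, interior vertices $c_1,\dots,c_5$, edges $c_ic_{i+1}$ and $c_im_i$, and replace the face by the central pentagon $c_1\cdots c_5$ and petals $v_i\,m_i\,c_i\,c_{i-1}\,m_{i-1}$. $K_0$ is one pentagon, $K_n=\omega^n(K_0)$, $K_n$ embeds onto the central superpentagon $\omega^n(\text{central face of }\omega(K_0))$ of $K_{n+1}$, and $K$ is the direct limit. Distance between vertices is the length of a shortest edge path. $B(u,n,K)$ is the subcomplex of $K$ consisting of the faces all of whose vertices are at distance at most $n$ from $u$, with their edges and vertices. Its boundary consists of the edges $e$ that lie in a face in the ball and in a face not in the ball, together with their vertices. *)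

From HB Require Import structures.
From mathcomp Require Import all_boot.
Set Implicit Arguments. Unset Strict Implicit. Unset Printing Implicit Defensive.

(* Orig i : the 5 vertices v_0..v_4 of K_0 (i < 5);
   Mid a b : the vertex added inside the edge {a,b} (stored canonically, see [mid]);
   Cen a b i : the interior vertex c_i added in the face whose listed boundary
   starts with the directed edge a -> b (a consistently oriented face is
   determined by a directed edge). *)
Inductive vtx := Orig of nat | Mid of vtx & vtx | Cen of vtx & vtx & nat.

Fixpoint vtx2tree (v : vtx) : GenTree.tree nat :=
  match v with
  | Orig i => GenTree.Leaf i
  | Mid a b => GenTree.Node 0 [:: vtx2tree a; vtx2tree b]
  | Cen a b i => GenTree.Node i.+1 [:: vtx2tree a; vtx2tree b]
  end.

Fixpoint tree2vtx (t : GenTree.tree nat) : option vtx :=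
  match t with
  | GenTree.Leaf i => Some (Orig i)
  | GenTree.Node 0 [:: ta; tb] =>
      match tree2vtx ta, tree2vtx tb with
      | Some a, Some b => Some (Mid a b) | _, _ => None end
  | GenTree.Node i.+1 [:: ta; tb] =>
      match tree2vtx ta, tree2vtx tb with
      | Some a, Some b => Some (Cen a b i) | _, _ => None end
  | _ => None
  end.

Lemma vtx2treeK : pcancel vtx2tree tree2vtx.
Proof. by elim=> [i|a IHa b IHb|a IHa b IHb i] //=; rewrite IHa IHb. Qed.

HB.instance Definition _ := Countable.copy vtx (pcan_type vtx2treeK).

Fixpoint vcmp (a b : vtx) : comparison :=
  match a, b with
  | Orig i, Orig j => Nat.compare i j
  | Orig _, _ => Lt
  | Mid _ _, Orig _ => Gt
  | Mid a1 a2, Mid b1 b2 =>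
      match vcmp a1 b1 with Eq => vcmp a2 b2 | c => c end
  | Mid _ _, Cen _ _ _ => Lt
  | Cen a1 a2 i, Cen b1 b2 j =>
      match vcmp a1 b1 with
      | Eq => match vcmp a2 b2 with Eq => Nat.compare i j | c => c end
      | c => c end
  | Cen _ _ _, _ => Gt
  end.

(* canonical (symmetric) name of the midpoint of the edge {a,b} *)
Definition mid (a b : vtx) : vtx :=
  if vcmp a b is Gt then Mid b a else Mid a b.

(* A face is the list of its boundary vertices in cyclic order. *)
Definition face := seq vtx.

(* The subdivision rule omega on one pentagon v_0 .. v_4 (indices mod 5):
   central pentagon c_0..c_4 and petals v_i m_i c_i c_{i-1} m_{i-1}. *)
Definition subdiv_face (f : face) : seq face :=
  let v i := nth (Orig 0) f (i %% 5) in
  let m i := mid (v i) (v i.+1) in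
  let c i := Cen (v 0) (v 1) (i %% 5) in
  [:: [seq c i | i <- iota 0 5] &
      [seq [:: v i; m i; c i; c (i + 4); m (i + 4)] | i <- iota 0 5]].

Definition omega (X : seq face) : seq face := flatten (map subdiv_face X).

Definition P0 : face := [seq Orig i | i <- iota 0 5].

Definition Kn (n : nat) : seq face := iter n omega [:: P0].

(* Renaming induced by the embedding of K_0 onto the central face of omega(K_0);
   it commutes with omega, so lift k embeds K_n onto the central superpentagon
   omega^n(central face) of K_{n+k}, level by level. *)
Fixpoint subst (v : vtx) : vtx :=
  match v with
  | Orig i => Cen (Orig 0) (Orig 1) i
  | Mid a b => mid (subst a) (subst b)
  | Cen a b i => Cen (subst a) (subst b) i
  end.

Definition lift (k : nat) (v : vtx) : vtx := iter k subst v.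

(* A vertex (resp. face) of K is represented by a level n and a vertex (resp.
   face) of K_n; representatives are identified through the embeddings. *)
Definition KV := (nat * vtx)%type.
Definition KF := (nat * face)%type.

Definition Kvalid (x : KV) : Prop := x.2 \in flatten (Kn x.1).
Definition Kface (F : KF) : Prop := F.2 \in Kn F.1.

Definition up (N : nat) (x : KV) : vtx := lift (N - x.1) x.2.
Definition upF (N : nat) (F : KF) : face := map (lift (N - F.1)) F.2.

Definition Ksame (x y : KV) : Prop :=
  exists N, [/\ x.1 <= N, y.1 <= N & up N x = up N y].

Definition face_edge (f : face) (a b : vtx) : bool :=
  has (fun i => let p := nth (Orig 0) f i in
                let q := nth (Orig 0) f (i.+1 %% size f) in
                ((p == a) && (q == b)) || ((p == b) && (q == a)))
      (iota 0 (size f)).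

Definition edge_in_face (x y : KV) (F : KF) : Prop :=
  exists N, [/\ x.1 <= N, y.1 <= N, F.1 <= N & face_edge (upF N F) (up N x) (up N y)].

Definition Kadj (x y : KV) : Prop :=
  [/\ Kvalid x, Kvalid y & exists F, Kface F /\ edge_in_face x y F].

Inductive Kwalk : KV -> KV -> nat -> Prop :=
| Kwalk0 x y : Ksame x y -> Kwalk x y 0
| KwalkS x y z k : Kadj x y -> Kwalk y z k -> Kwalk x z k.+1.

Definition Kdist (x y : KV) (d : nat) : Prop :=
  Kwalk x y d /\ forall k, Kwalk x y k -> d <= k.

Definition inBall (u : KV) (n : nat) (F : KF) : Prop :=
  Kface F /\ forall v, v \in F.2 -> exists d, Kdist (F.1, v) u d /\ d <= n.

Definition Kbdry_edge (u : KV) (n : nat) (x y : KV) : Prop :=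
  Kadj x y /\ exists F1 F2, [/\ inBall u n F1, Kface F2, ~ inBall u n F2,
                               edge_in_face x y F1 & edge_in_face x y F2].

Definition Kbdry_vtx (u : KV) (n : nat) (x : KV) : Prop :=
  exists y, Kbdry_edge u n x y.

(* A boundary vertex x lies on an edge shared by a face of the ball and a face F
   outside it.  The first face gives d(x,u) <= n.  Every vertex of the pentagon F
   is within two edges of x, so d(x,u) <= n - 2 would put all of F within
   distance n of u, i.e. F in the ball. *)
From Pilot Require Import Defs.
From mathcomp Require Import all_boot zify.
From Stdlib Require Import Classical Wf_nat.

Set Implicit Arguments.
Unset Strict Implicit.
Unset Printing Implicit Defensive.

Lemma ex_least_nat (P : nat -> Prop) k :
  P k -> exists d, [/\ P d, d <= k & forall k', P k' -> d <= k'].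
Proof.
move=> Pk; have [d [[Pd d_min] _]] :=
  dec_inh_nat_subset_has_unique_least_element P (fun m => classic (P m)) (ex_intro _ k Pk).
by exists d; split=> // [|k' /d_min /leP //]; apply/leP/d_min.
Qed.

Lemma size_Kn_face m f : f \in Kn m -> size f = 5.
Proof.
case: m => [|m] /=; first by rewrite inE => /eqP ->.
case/flattenP=> _ /mapP [g _ ->].
by rewrite inE => /orP [/eqP -> | /mapP [i _ ->]].
Qed.

Lemma up_lift (a : KV) N L :
  a.1 <= N -> N <= L -> up L a = Defs.lift (L - N) (up N a).
Proof. by move=> aN NL; rewrite /up /Defs.lift -iterD; congr iter; lia. Qed.

Lemma upF_lift (F : KF) N L :
  F.1 <= N -> N <= L -> upF L F = map (Defs.lift (L - N)) (upF N F).
Proof.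
move=> FN NL; rewrite /upF -map_comp; apply: eq_map => v /=.
by rewrite /Defs.lift -iterD; congr iter; lia.
Qed.

Lemma face_edge_map g f a b : face_edge f a b -> face_edge (map g f) (g a) (g b).
Proof.
rewrite /face_edge size_map => /hasP [i]; rewrite mem_iota add0n => lt_i_f /= e_ab.
apply/hasP; exists i; first by rewrite mem_iota.
have lt_Si_f : i.+1 %% size f < size f by rewrite ltn_pmod //; lia.
rewrite /= !(nth_map (Orig 0)) //.
by case/orP: e_ab => /andP [/eqP -> /eqP ->]; rewrite !eqxx ?orbT.
Qed.

Lemma up_eq_ge (a b : KV) N L :
  a.1 <= N -> b.1 <= N -> N <= L -> up N a = up N b -> up L a = up L b.
Proof. by move=> aN bN NL e; rewrite (up_lift aN NL) (up_lift bN NL) e. Qed.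

Lemma face_edge_up_ge (F : KF) x y N L :
  F.1 <= N -> x.1 <= N -> y.1 <= N -> N <= L ->
  face_edge (upF N F) (up N x) (up N y) -> face_edge (upF L F) (up L x) (up L y).
Proof.
move=> FN xN yN NL; rewrite (upF_lift FN NL) (up_lift xN NL) (up_lift yN NL).
exact: face_edge_map.
Qed.

Lemma Ksame_sym a b : Ksame a b -> Ksame b a.
Proof. by case=> N [aN bN e]; exists N. Qed.

Lemma Ksame_trans a b c : Ksame a b -> Ksame b c -> Ksame a c.
Proof.
case=> N [aN bN eab] [M [bM cM ebc]]; exists (maxn N M).
have [NL ML] : N <= maxn N M /\ M <= maxn N M by rewrite leq_maxl leq_maxr.
split; [exact: leq_trans NL | exact: leq_trans ML |].
by rewrite (up_eq_ge aN bN NL eab) (up_eq_ge bM cM ML ebc).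
Qed.

Lemma Kadj_Ksame a b z : Ksame b a -> Kvalid b -> Kadj a z -> Kadj b z.
Proof.
case=> M [bM aM eba] vb [_ vz [F [KF [N [aN zN FN e_az]]]]].
have [NL ML] : N <= maxn N M /\ M <= maxn N M by rewrite leq_maxl leq_maxr.
split=> //; exists F; split=> //; exists (maxn N M).
split; [exact: leq_trans ML | exact: leq_trans NL | exact: leq_trans NL |].
by rewrite (up_eq_ge bM aM ML eba); apply: face_edge_up_ge e_az.
Qed.

Lemma Kwalk_Ksame a b u k : Ksame b a -> Kvalid b -> Kwalk a u k -> Kwalk b u k.
Proof.
move=> eba vb w; case: w eba => [x y exy | x y z k' adj_xy w] eba.
  exact: Kwalk0 (Ksame_trans eba exy).
exact: KwalkS (Kadj_Ksame eba vb adj_xy) w.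
Qed.

Lemma Kwalk_Kdist a u k : Kwalk a u k -> exists2 d, Kdist a u d & d <= k.
Proof. by case/ex_least_nat=> d [w le_dk d_min]; exists d. Qed.

Definition corner (F : KF) (i : nat) : KV :=
  (F.1, nth (Orig 0) F.2 (i %% size F.2)).

Lemma corner_nth (F : KF) i : i < size F.2 -> corner F i = (F.1, nth (Orig 0) F.2 i).
Proof. by move=> lt_iF; rewrite /corner modn_small. Qed.

Lemma Kvalid_corner F i : Kface F -> Kvalid (corner F i).
Proof.
move=> KF; apply/flattenP; exists F.2 => //; apply: mem_nth.
by rewrite ltn_pmod // (size_Kn_face KF).
Qed.

Lemma edge_in_face_corner x y F :
  Kface F -> edge_in_face x y F -> exists j, Ksame x (corner F j).
Proof.
move=> KF [N [xN yN FN]]; have sF := size_Kn_face KF.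
rewrite /face_edge /upF size_map sF => /hasP [i]; rewrite mem_iota => /andP [_ lt_i5] /=.
have lt_Si5 : i.+1 %% 5 < 5 by rewrite ltn_pmod.
rewrite !(nth_map (Orig 0)) ?sF //.
case/orP=> [/andP [/eqP e_x _] | /andP [_ /eqP e_x]]; [exists i | exists i.+1];
  by exists N; rewrite /corner sF ?(modn_small lt_i5) -e_x.
Qed.

Lemma face_edge_sym f a b : face_edge f a b = face_edge f b a.
Proof. by apply: eq_has => i /=; rewrite orbC. Qed.

Lemma edge_in_face_level (F : KF) a b :
  face_edge F.2 a b -> edge_in_face (F.1, a) (F.1, b) F.
Proof. by move=> e_ab; exists F.1; rewrite /upF /up /= subnn map_id. Qed.

Lemma Kadj_corner F i :
  Kface F -> Kadj (corner F i) (corner F i.+1) /\ Kadj (corner F i.+1) (corner F i).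
Proof.
move=> KF; have pos_F : 0 < size F.2 by rewrite (size_Kn_face KF).
have e_i : face_edge F.2 (corner F i).2 (corner F i.+1).2.
  apply/hasP; exists (i %% size F.2); first by rewrite mem_iota ltn_pmod.
  by rewrite /corner /= -[(i %% _).+1]addn1 modnDml addn1 !eqxx.
have vF j : Kvalid (corner F j) by exact: Kvalid_corner.
by split; split=> //; exists F; split=> //; apply: edge_in_face_level;
  rewrite // face_edge_sym.
Qed.

Section WalksInAFace.

Variables (F : KF) (u : KV).
Hypothesis KF : Kface F.

Lemma Kwalk_corner_forward i k d :
  Kwalk (corner F (i + k)) u d -> Kwalk (corner F i) u (d + k).
Proof.
elim: k i => [|k IHk] i; first by rewrite !addn0.
rewrite addnS -addSn => /IHk w; rewrite addnS.
by apply: KwalkS w; case: (Kadj_corner i KF).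
Qed.

Lemma Kwalk_corner_backward i k d :
  Kwalk (corner F i) u d -> Kwalk (corner F (i + k)) u (d + k).
Proof.
elim: k => [|k IHk] w; first by rewrite !addn0.
by rewrite !addnS; apply: KwalkS (IHk w); case: (Kadj_corner (i + k) KF).
Qed.

Lemma corner_mod i j : i = j %[mod 5] -> corner F i = corner F j.
Proof. by rewrite /corner (size_Kn_face KF) => ->. Qed.

Lemma Kwalk_corner_diam i j d :
  Kwalk (corner F j) u d -> exists2 k, k <= d.+2 & Kwalk (corner F i) u k.
Proof.
(* j is r steps after i around the pentagon: go r steps forward or 5 - r back. *)
set r := (j %% 5 + 5 - i %% 5) %% 5.
have [le_r2 | lt2_r] := leqP r 2.
  rewrite (@corner_mod j (i + r)); last by rewrite /r; lia.
  by move/Kwalk_corner_forward; exists (d + r) => //; lia.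
rewrite (@corner_mod i (j + (5 - r))); last by rewrite /r; lia.
by move/(Kwalk_corner_backward (5 - r)); exists (d + (5 - r)) => //; rewrite /r; lia.
Qed.

Lemma inBall_corner n :
  (forall i, exists2 k, k <= n & Kwalk (corner F i) u k) -> inBall u n F.
Proof.
move=> walks; split=> // v /(nthP (Orig 0)) [i lt_iF <-].
have [k le_kn] := walks i; rewrite corner_nth // => /Kwalk_Kdist [d dist_d le_dk].
by exists d; split=> //; lia.
Qed.

Lemma inBall_corner_dist n i :
  inBall u n F -> exists2 d, Kwalk (corner F i) u d & d <= n.
Proof.
have pos_F : 0 < size F.2 by rewrite (size_Kn_face KF).
case=> _ ball_F; have [d [[w _] le_dn]] := ball_F _ (mem_nth (Orig 0) (ltn_pmod i pos_F)).
by exists d.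
Qed.

End WalksInAFace.

Theorem mainTheorem17 (u : KV) (n : nat) (x : KV) :
  Kvalid u -> Kbdry_vtx u n x ->
  exists d, Kdist x u d /\ (d = n \/ d.+1 = n).
Proof.
move=> _ [y [adj_xy [F1 [F2 [ball_F1 KF2 not_ball_F2 edge1 edge2]]]]].
have vx : Kvalid x by case: adj_xy.
have KF1 : Kface F1 by case: ball_F1.
have [j1 x_j1] := edge_in_face_corner KF1 edge1.
have [d0 w0 le_d0n] := inBall_corner_dist KF1 j1 ball_F1.
have [d [w_d d_min] le_dd0] := Kwalk_Kdist (Kwalk_Ksame x_j1 vx w0).
exists d; split; first by split.
have [|lt_dn] := leqP n.-1 d; first lia.
case: not_ball_F2; apply: inBall_corner => // i.
have [j2 x_j2] := edge_in_face_corner KF2 edge2.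
have w2 := Kwalk_Ksame (Ksame_sym x_j2) (Kvalid_corner j2 KF2) w_d.
by have [k le_k w_k] := Kwalk_corner_diam KF2 i w2; exists k => //; lia.
Qed.
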